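(* Let $P=\sum_{S\in\mathbb{S}_P}S\subset\mathbb{E}^3$ be a three-dimensional zonotope with generator set $\mathbb{S}_P$ consisting of pairwise non-parallel segments centered at the origin, let $S_0\in\mathbb{S}_P$, and let $\vec S_0$ be the vector from one endpoint of $S_0$ to the other. Let $P^*=\sum_{S\in\mathbb{S}_P\setminus\{S_0\}}S$. Then $$P\cap(P+\vec S_0)=P^*+\tfrac12\vec S_0.$$
   Context: A zonotope is a Minkowski sum of finitely many segments; its generator set is such a family of segments. *)

From HB Require Import structures.
From mathcomp Require Import all_boot all_order all_algebra.
From mathcomp Require Import classical_sets.
Set Implicit Arguments. Unset Strict Implicit. Unset Printing Implicit Defensive.
Import Order.TTheory GRing.Theory Num.Theory.
Local Open Scope ring_scope.
Local Open Scope classical_set_scope.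

Section Zono.
Variable R : realFieldType.
Local Notation pt := 'rV[R]_3.

Definition msum (A B : set pt) : set pt := [set a + b | a in A & b in B].

Definition translate (A : set pt) (v : pt) : set pt := [set a + v | a in A].

(* the segment centered at the origin with endpoints -v/2 and v/2;
   the vector from one endpoint to the other is v *)
Definition csegment (v : pt) : set pt :=
  [set t *: v | t in [set t : R | -(1/2) <= t <= 1/2]].

Definition parallel (u v : pt) : Prop := exists c : R, u = c *: v \/ v = c *: u.

Definition zonotope (n : nat) (G : 'M[R]_(n, 3)) (A : {set 'I_n}) : set pt :=
  \big[msum/[set 0]]_(i in A) csegment (row i G).

End Zono.

From HB Require Import structures.
From mathcomp Require Import all_boot all_order all_algebra.
From mathcomp Require Import classical_sets.
From mathcomp Require Import lra.
Set Implicit Arguments. Unset Strict Implicit. Unset Printing Implicit Defensive.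
Import Order.TTheory GRing.Theory Num.Theory.
Local Open Scope ring_scope.
Local Open Scope classical_set_scope.

(* Splitting off the generator S0 writes P = S0 + P*, with P* convex. A point x
   of P and of P + v (v the vector of S0) is x = s v + z1 = (r + 1) v + z2 with
   z1, z2 in P* and s, r in [-1/2, 1/2]. Since s <= 1/2 <= r + 1, the point
   x - v/2 lies on the segment from z1 = x - s v to z2 = x - (r + 1) v, hence in
   P*; conversely P* + v/2 lies in both P and P + v. *)

Section MinkowskiSum.
Variable R : realFieldType.
Local Notation pt := 'rV[R]_3.

Lemma msumA : associative (@msum R).
Proof.
move=> A B C; apply/seteqP; split=> x /=.
- case=> a Aa [_ [b Bb [c Cc <-]] <-].
  by exists (a + b); [exists a => //; exists b | exists c => //; rewrite addrA].
- case=> _ [a Aa [b Bb <-]] [c Cc <-].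
  by exists a => //; exists (b + c); [exists b => //; exists c | rewrite addrA].
Qed.

Lemma msumC : commutative (@msum R).
Proof.
by move=> A B; apply/seteqP; split=> x [a Aa [b Bb <-]];
  exists b => //; exists a => //; rewrite addrC.
Qed.

Lemma msum0l : left_id [set (0 : pt)] (@msum R).
Proof.
move=> A; apply/seteqP; split=> x /=.
- by case=> a -> [b Bb <-]; rewrite add0r.
- by move=> Ax; exists 0 => //; exists x; rewrite ?add0r.
Qed.

Definition convex_set (A : set pt) : Prop :=
  forall a b t, A a -> A b -> 0 <= t <= 1 -> A (a + t *: (b - a)).

Lemma convex_set0 : convex_set [set 0].
Proof. by move=> a b t /= -> ->; rewrite subrr scaler0 addr0. Qed.

Lemma convex_msum (A B : set pt) :
  convex_set A -> convex_set B -> convex_set (msum A B).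
Proof.
move=> cA cB a b t [a1 A1 [a2 A2 <-]] [b1 B1 [b2 B2 <-]] t01.
exists (a1 + t *: (b1 - a1)); first exact: cA.
exists (a2 + t *: (b2 - a2)); first exact: cB.
by rewrite opprD [in RHS]addrACA [in RHS]scalerDr [in RHS]addrACA.
Qed.

Lemma csegment_scale (v : pt) (t : R) :
  -(1/2) <= t <= 1/2 -> csegment v (t *: v).
Proof. by exists t. Qed.

Lemma convex_csegment (v : pt) : convex_set (csegment v).
Proof.
move=> _ _ t [s /andP[s1 s2] <-] [r /andP[r1 r2] <-] /andP[t0 t1].
rewrite -scalerBl scalerA -scalerDl.
by apply: csegment_scale; apply/andP; split; nra.
Qed.

Lemma convex_set_between (A : set pt) (x v : pt) (a b c : R) : convex_set A ->
  A (x - a *: v) -> A (x - b *: v) -> a <= c <= b -> A (x - c *: v).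
Proof.
move=> cA Aa Ab /andP[ac cb].
have [eab|ab] := eqVneq a b.
  suff -> : c = a by [].
  by apply/eqP; rewrite eq_le ac andbT eab.
have ba : 0 < b - a by rewrite subr_gt0 lt_neqAle ab (le_trans ac cb).
have := cA _ _ ((c - a) / (b - a)) Aa Ab.
have -> : x - b *: v - (x - a *: v) = - ((b - a) *: v).
  by rewrite scalerBl !opprB addrC addrA subrK.
rewrite scalerN scalerA divfK ?gt_eqF // -addrA -opprD -scalerDl subrKC.
apply; apply/andP; split.
  by apply: divr_ge0; [rewrite subr_ge0 | exact: ltW].
by rewrite ler_pdivrMr // mul1r lerD2r.
Qed.

Lemma msum_csegment_meet_translate (v : pt) (Z : set pt) : convex_set Z ->
  msum (csegment v) Z `&` translate (msum (csegment v) Z) v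
  = translate Z ((1/2) *: v).
Proof.
move=> cZ; apply/seteqP; split=> x /=.
- case=> [[_ [s /andP[s1 s2] <-] [z1 Z1 Ex1]]].
  case=> _ [_ [r /andP[r1 r2] <-] [z2 Z2 <-]] Ex2.
  exists (x - (1/2) *: v); last by rewrite subrK.
  apply: (@convex_set_between _ _ _ s (r + 1)) => //.
  + by rewrite -Ex1 addrAC subrr add0r.
  + suff -> : x - (r + 1) *: v = z2 by [].
    by apply/eqP; rewrite subr_eq -Ex2 scalerDl scale1r addrA (addrC z2).
  + by apply/andP; split; lra.
- case=> z Zz <-; split.
    exists ((1/2) *: v); first by apply: csegment_scale; lra.
    by exists z; rewrite // addrC.
  exists ((-(1/2)) *: v + z).
    by exists ((-(1/2)) *: v); [apply: csegment_scale; lra | exists z].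
  by rewrite addrAC -{2}(scale1r v) -scalerDl addrC; congr (_ + _ *: _); lra.
Qed.

End MinkowskiSum.

HB.instance Definition _ (R : realFieldType) :=
  Monoid.isComLaw.Build (set 'rV[R]_3) [set 0] (@msum R)
    (@msumA R) (@msumC R) (@msum0l R).

Section Zonotope.
Variables (R : realFieldType) (n : nat) (G : 'M[R]_(n, 3)).

Lemma convex_zonotope (A : {set 'I_n}) : convex_set (zonotope G A).
Proof.
apply: (big_ind (@convex_set R)); first exact: convex_set0.
  exact: convex_msum.
by move=> i _; exact: convex_csegment.
Qed.

Lemma zonotopeD1 (A : {set 'I_n}) (i : 'I_n) : i \in A ->
  zonotope G A = msum (csegment (row i G)) (zonotope G (A :\ i)).
Proof.
move=> Ai; rewrite /zonotope (bigD1 i) //=; congr msum.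
by apply: eq_bigl => j; rewrite !inE andbC.
Qed.

End Zonotope.

Theorem corollary4p2 (R : realFieldType) (n : nat) (G : 'M[R]_(n, 3))
  (i0 : 'I_n)
  (Hnz : forall i : 'I_n, row i G != 0)
  (Hnpar : forall i j : 'I_n, i != j -> ~ parallel (row i G) (row j G))
  (H3 : \rank G = 3%N) :
  zonotope G (finset.setT) `&` translate (zonotope G (finset.setT)) (row i0 G)
  = translate (zonotope G (finset.setC (finset.set1 i0))) ((1/2) *: row i0 G).
Proof.
rewrite (zonotopeD1 G (finset.in_setT i0)) finset.setTD.
exact/msum_csegment_meet_translate/convex_zonotope.
Qed.
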